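(* Assume the setting and algorithm described in the context. If $0<\alpha\le\frac{\sqrt n}{\sqrt{8m}\,L}$, then for all $k\ge0$, almost surely, $$\mathbb E\big[t^{k+1}\,|\,\mathcal F^k\big]\le 2t^k+3\alpha^2\|\overline{\nabla\mathbf f}(x^k)\|^2+\frac{9}{4mn}\|x^k-Jx^k\|^2 .$$
   Context: Setting. Let $n,m,p\ge1$ be integers and $\mathcal V=\{1,\dots,n\}$. For each $i\in\mathcal V$ and $j\in\{1,\dots,m\}$, $f_{i,j}:\mathbb R^p\to\mathbb R$ is differentiable and $L$-smooth for some $L>0$, i.e. $\|\nabla f_{i,j}(x)-\nabla f_{i,j}(y)\|\le L\|x-y\|$ for all $x,y\in\mathbb R^p$. Let $f_i:=\frac1m\sum_{j=1}^m f_{i,j}$ and $F:=\frac1n\sum_{i=1}^n f_i$, and assume $F^*:=\inf_{x\in\mathbb R^p}F(x)>-\infty$. Let $\underline W=(\underline w_{ir})\in\mathbb R^{n\times n}$ be a nonnegative, primitive, doubly stochastic matrix ($\underline W\mathbf 1_n=\mathbf 1_n$, $\mathbf 1_n^\top\underline W=\mathbf 1_n^\top$), and let $\lambda\in[0,1)$ be its second largest singular value. Any expression with $\lambda$ in a denominator is read as $+\infty$ when $\lambda=0$. Algorithm GT-SAGA with step-size $\alpha>0$: fix a deterministic $\bar x^0\in\mathbb R^p$; for all $i\in\mathcal V$ set $x_i^0=\bar x^0$, $z_{i,j}^0=x_i^0$ for all $j$, $y_i^0=0$, $g_i^{-1}=0$. For $k=0,1,2,\dots$ and every $i\in\mathcal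 V$: draw $\tau_i^k$ uniformly from $\{1,\dots,m\}$; set $g_i^k=\nabla f_{i,\tau_i^k}(x_i^k)-\nabla f_{i,\tau_i^k}(z_{i,\tau_i^k}^k)+\frac1m\sum_{j=1}^m\nabla f_{i,j}(z_{i,j}^k)$; set $y_i^{k+1}=\sum_{r=1}^n\underline w_{ir}(y_r^k+g_r^k-g_r^{k-1})$; set $x_i^{k+1}=\sum_{r=1}^n\underline w_{ir}(x_r^k-\alpha y_r^{k+1})$; draw $s_i^k$ uniformly from $\{1,\dots,m\}$; set $z_{i,j}^{k+1}=x_i^k$ if $j=s_i^k$ and $z_{i,j}^{k+1}=z_{i,j}^k$ otherwise. The family $\{\tau_i^k,s_i^k: i\in\mathcal V,k\ge0\}$ is independent. Notation. $x^k,y^k,g^k\in\mathbb R^{np}$ stack the $x_i^k$, $y_i^k$, $g_i^k$; $\nabla\mathbf f(x^k)\in\mathbb R^{np}$ stacks $\nabla f_i(x_i^k)$, $i=1,\dots,n$; $W=\underline W\otimes I_p$, $J=(\frac1n\mathbf 1_n\mathbf 1_n^\top)\otimes I_p$; $\bar x^k=\frac1n\sum_i x_i^k$, $\bar g^k=\frac1n\sum_i g_i^k$, $\overline{\nabla\mathbf f}(x^k)=\frac1n\sum_i\nabla f_i(x_i^k)$. $\mathcal F^0$ is the trivial $\sigma$-algebra and $\mathcal F^k=\sigma(\{\tau_i^t,s_i^t:i\in\mathcal V,\ t\le k-1\})$ for $k\ge1$. $t^k:=\frac1n\sum_{i=1}^n\frac1m\sum_{j=1}^m\|\bar x^k-z_{i,j}^k\|^2$.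 $\|\nabla\mathbf f(x^0)\|^2:=\sum_{i=1}^n\|\nabla f_i(\bar x^0)\|^2$. Norms are Euclidean (spectral for matrices); vector and matrix inequalities are entrywise. *)

From mathcomp Require Import all_boot all_order all_algebra.
From mathcomp Require Import all_classical all_reals all_analysis.
Import Order.TTheory GRing.Theory Num.Theory.
Import numFieldNormedType.Exports.
Set Implicit Arguments.
Unset Strict Implicit.
Unset Printing Implicit Defensive.
Local Open Scope ring_scope.

(* Vectors of R^p are row vectors 'rV[R]_p; agent indices {1..n} are 'I_n,
   component indices {1..m} are 'I_m. *)

Definition sqnorm (R : realType) (p : nat) (v : 'rV[R]_p) : R :=
  \sum_(l < p) (v 0 l) ^+ 2.
Definition enorm (R : realType) (p : nat) (v : 'rV[R]_p) : R :=
  Num.sqrt (sqnorm v).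
Definition dotv (R : realType) (p : nat) (u v : 'rV[R]_p) : R :=
  \sum_(l < p) u 0 l * v 0 l.

Definition is_gradient (R : realType) (p : nat) (f : 'rV[R]_p -> R)
  (g : 'rV[R]_p -> 'rV[R]_p) : Prop :=
  forall x, differentiable f x /\ forall v, 'd f x v = dotv (g x) v.

Definition L_smooth (R : realType) (p : nat) (L : R)
  (g : 'rV[R]_p -> 'rV[R]_p) : Prop :=
  forall x y, enorm (g x - g y) <= L * enorm (x - y).

Definition nonneg_mx (R : realType) (n : nat) (W : 'M[R]_n) : Prop :=
  forall i j, 0 <= W i j.
Definition doubly_stochastic (R : realType) (n : nat) (W : 'M[R]_n) : Prop :=
  nonneg_mx W /\ (forall i, \sum_(r < n) W i r = 1)
             /\ (forall r, \sum_(i < n) W i r = 1).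
Definition primitive_mx (R : realType) (n : nat) (W : 'M[R]_n) : Prop :=
  exists k : nat, (0 < k)%N /\ forall i j, 0 < (W ^+ k) i j.

(* Random draws at one iteration: for every agent i, the pair (tau_i^k, s_i^k). *)
Definition draws (n m : nat) := {ffun 'I_n -> 'I_m * 'I_m}.

(* State of GT-SAGA at iteration k:
   x_i^k, y_i^k, g_i^{k-1}, z_{i,j}^k. *)
Record gts_state (R : realType) (n m p : nat) := GTS {
  st_x : 'I_n -> 'rV[R]_p;
  st_y : 'I_n -> 'rV[R]_p;
  st_gprev : 'I_n -> 'rV[R]_p;
  st_z : 'I_n -> 'I_m -> 'rV[R]_p }.

Section GTSAGA.
Variables (R : realType) (n m p : nat).
Variables (W : 'M[R]_n) (alpha : R) (gf : 'I_n -> 'I_m -> 'rV[R]_p -> 'rV[R]_p).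

Definition gts_init (x0 : 'rV[R]_p) : gts_state R n m p :=
  GTS (fun _ => x0) (fun _ => 0) (fun _ => 0) (fun _ _ => x0).

Definition gts_g (st : gts_state R n m p) (d : draws n m) (i : 'I_n) : 'rV[R]_p :=
  let tau := (d i).1 in
  gf i tau (st_x st i) - gf i tau (st_z st i tau)
  + (m%:R)^-1 *: \sum_(j < m) gf i j (st_z st i j).

Definition gts_step (st : gts_state R n m p) (d : draws n m) : gts_state R n m p :=
  let g := gts_g st d in
  let y' := fun i => \sum_(r < n) W i r *: (st_y st r + g r - st_gprev st r) in
  let x' := fun i => \sum_(r < n) W i r *: (st_x st r - alpha *: y' r) in
  let z' := fun i j => if j == (d i).2 then st_x st i else st_z st i j in
  GTS x' y' g z'.

(* state at iteration k along the sequence of draws omega (omega k = draws at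
   iteration k); it depends only on omega 0, ..., omega (k-1) *)
Fixpoint gts_iter (x0 : 'rV[R]_p) (omega : nat -> draws n m) (k : nat)
  : gts_state R n m p :=
  match k with
  | 0 => gts_init x0
  | k'.+1 => gts_step (gts_iter x0 omega k') (omega k')
  end.
End GTSAGA.

Section Quantities.
Variables (R : realType) (n m p : nat).

Definition avg_x (x : 'I_n -> 'rV[R]_p) : 'rV[R]_p :=
  (n%:R)^-1 *: \sum_(i < n) x i.

Definition t_quant (st : gts_state R n m p) : R :=
  (n%:R)^-1 * \sum_(i < n) ((m%:R)^-1 * \sum_(j < m) sqnorm (avg_x (st_x st) - st_z st i j)).

Definition consensus_err (x : 'I_n -> 'rV[R]_p) : R :=
  \sum_(i < n) sqnorm (x i - avg_x x).

Definition avg_grad (gf : 'I_n -> 'I_m -> 'rV[R]_p -> 'rV[R]_p)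
  (x : 'I_n -> 'rV[R]_p) : 'rV[R]_p :=
  (n%:R)^-1 *: \sum_(i < n) ((m%:R)^-1 *: \sum_(j < m) gf i j (x i)).

(* Conditional expectation given F^k of a random variable X that is a function
   of the draws of iterations 0..k: since the draws of iteration k are uniform
   on draws n m and independent of F^k, E[X | F^k](omega) is the average of X
   over all possible draws at iteration k, keeping omega 0..k-1 fixed. *)
Definition replace_draw (omega : nat -> draws n m) (k : nat) (d : draws n m) :
  nat -> draws n m := fun t => if t == k then d else omega t.

Definition cond_exp_Fk (X : (nat -> draws n m) -> R) (k : nat)
  (omega : nat -> draws n m) : R :=
  (#|{: draws n m}|%:R)^-1 * \sum_(d : draws n m) X (replace_draw omega k d).
End Quantities.

From mathcomp Require Import all_boot all_order all_algebra.
From mathcomp Require Import all_classical all_reals all_analysis.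
From mathcomp Require Import ring lra.
Import Order.TTheory GRing.Theory Num.Theory.
Import numFieldNormedType.Exports.
Local Open Scope ring_scope.
Set Implicit Arguments.
Unset Strict Implicit.

(* Gradient tracking preserves the average: W is column stochastic, so the
   mean of the y_i equals the mean of the previous estimators g_i, and the
   network average moves as xbar^{k+1} = xbar^k - alpha gbar^k.  Hence
   |xbar^{k+1} - z^{k+1}_{ij}|^2 <= 3/2 |xbar^k - z^{k+1}_{ij}|^2 + 3 alpha^2 |gbar^k|^2.
   Each table entry z_{ij} is overwritten by x_i with probability 1/m, which
   gives 1/(mn) |x - Jx|^2 + (1 - 1/m) t^k for the first term.  The SAGA
   estimators are unbiased with independent noise across agents, and variance
   is bounded by the second moment, so by smoothness
   E|gbar^k|^2 <= |grad f(x^k)|^2 + L^2/n avg_{ij} |x_i - z_{ij}|^2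
              <= |grad f(x^k)|^2 + 2 L^2/n (|x - Jx|^2/n + t^k).
   The step size gives alpha^2 L^2 / n <= 1/(8m), which absorbs this last term. *)

Section Mean.
Variable R : realFieldType.

Definition mean (T : finType) (F : T -> R) : R := (#|T|%:R)^-1 * \sum_x F x.

Variable T : finType.
Implicit Types (F G : T -> R) (c : R).

Lemma meanD F G : mean (fun x => F x + G x) = mean F + mean G.
Proof. by rewrite /mean big_split mulrDr. Qed.

Lemma meanZ c F : mean (fun x => c * F x) = c * mean F.
Proof. by rewrite /mean -mulr_sumr mulrCA. Qed.

Lemma mean_sum (I : finType) (F : I -> T -> R) :
  mean (fun x => \sum_i F i x) = \sum_i mean (F i).
Proof. by rewrite /mean exchange_big mulr_sumr. Qed.

Lemma mean_comm (U : finType) (F : T -> U -> R) :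
  mean (fun x => mean (F x)) = mean (fun y => mean (F^~ y)).
Proof. by rewrite /mean -!mulr_sumr exchange_big mulrCA. Qed.

Lemma ler_mean F G : (forall x, F x <= G x) -> mean F <= mean G.
Proof. by move=> FG; rewrite ler_wpM2l ?invr_ge0 ?ler0n // ler_sum. Qed.

Lemma mean_ge0 F : (forall x, 0 <= F x) -> 0 <= mean F.
Proof. by move=> F0; rewrite mulr_ge0 ?invr_ge0 ?ler0n ?sumr_ge0. Qed.

Hypothesis T_gt0 : (0 < #|T|)%N.

Lemma card_neq0 : (#|T|%:R : R) != 0.
Proof. by rewrite pnatr_eq0 -lt0n. Qed.

Lemma mean_const c : mean (fun _ : T => c) = c.
Proof. by rewrite /mean sumr_const -[c *+ _]mulr_natl mulKf // card_neq0. Qed.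

Lemma mean_if_eq (s : T) (A B : R) :
  mean (fun t => if s == t then A else B)
  = (#|T|%:R)^-1 * A + (1 - (#|T|%:R)^-1) * B.
Proof.
have -> : (fun t => if s == t then A else B)
    = fun t => B + (if t == s then A - B else 0).
  by apply: funext => t; rewrite eq_sym; case: ifP => _; rewrite ?addr0 // addrC subrK.
by rewrite meanD mean_const /mean -big_mkcond big_pred1_eq; ring.
Qed.

Lemma mean_sqrB_mean_le F :
  mean (fun x => (F x - mean F) ^+ 2) <= mean (fun x => F x ^+ 2).
Proof.
have -> : mean (fun x => (F x - mean F) ^+ 2)
    = mean (fun x => F x ^+ 2) - mean F ^+ 2.
  transitivity (mean (fun x => F x ^+ 2 + (- 2 * mean F) * F x + mean F ^+ 2)).
    by congr mean; apply: funext => x; ring.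
  by rewrite !meanD meanZ mean_const; ring.
by rewrite gerBl sqr_ge0.
Qed.
End Mean.

Section MeanPair.
Variables (R : realFieldType) (T1 T2 : finType).

Lemma mean_fst (h : T1 -> R) : (0 < #|T2|)%N ->
  mean (fun u : T1 * T2 => h u.1) = mean h.
Proof.
move=> T2_gt0; rewrite /mean card_prod natrM -(pair_bigA _ (fun a _ => h a)) /=.
under eq_bigr do rewrite sumr_const -mulr_natr.
rewrite -mulr_suml; change #|xpredT| with #|T2|.
by rewrite invfM -mulrA [_ * #|T2|%:R]mulrC mulKf ?card_neq0.
Qed.

Lemma mean_snd (h : T2 -> R) : (0 < #|T1|)%N ->
  mean (fun u : T1 * T2 => h u.2) = mean h.
Proof.
move=> T1_gt0; rewrite /mean card_prod natrM -(pair_bigA _ (fun _ b => h b)) /=.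
rewrite sumr_const -[(\sum_j h j) *+ _]mulr_natl; change #|xpredT| with #|T1|.
by rewrite invfM [_^-1 * _]mulrC -mulrA mulKf ?card_neq0.
Qed.
End MeanPair.

(* [mean] over [{ffun I -> T}] is the expectation under independent uniform
   draws, one for each [i : I]. *)
Section MeanFfun.
Variables (R : realFieldType) (I T : finType).
Hypothesis T_gt0 : (0 < #|T|)%N.

Lemma mean_ffun_prod (F : I -> T -> R) :
  mean (fun d : {ffun I -> T} => \prod_i F i (d i)) = \prod_i mean (F i).
Proof.
by rewrite /mean card_ffun natrX -exprVn big_split prodr_const bigA_distr_bigA.
Qed.

Lemma mean_ffun_app1 (i : I) (F : T -> R) :
  mean (fun d : {ffun I -> T} => F (d i)) = mean F.
Proof.
pose G j := if j == i then F else fun _ => 1.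
transitivity (mean (fun d : {ffun I -> T} => \prod_j G j (d j))).
  congr mean; apply: funext => d.
  by rewrite (bigD1 i) //= big1 ?mulr1 /G ?eqxx // => j /negbTE ->.
rewrite mean_ffun_prod (bigD1 i) //= big1 ?mulr1 /G ?eqxx //.
by move=> j /negbTE ->; rewrite mean_const.
Qed.

Lemma mean_ffun_app2 (i i' : I) (F G : T -> R) : i != i' ->
  mean (fun d : {ffun I -> T} => F (d i) * G (d i')) = mean F * mean G.
Proof.
move=> ii'; pose H j := if j == i then F else if j == i' then G else fun _ => 1.
have Hi : H i = F by rewrite /H eqxx.
have Hi' : H i' = G by rewrite /H eq_sym (negbTE ii') eqxx.
have H1 j : j != i -> j != i' -> H j = fun _ => 1.
  by rewrite /H => /negbTE -> /negbTE ->.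
transitivity (mean (fun d : {ffun I -> T} => \prod_j H j (d j))).
  congr mean; apply: funext => d; rewrite (bigD1 i) //= (bigD1 i') 1?eq_sym //=.
  by rewrite Hi Hi' big1 ?mulr1 // => j /andP[ji ji']; rewrite H1.
rewrite mean_ffun_prod (bigD1 i) //= (bigD1 i') 1?eq_sym //= Hi Hi'.
by rewrite big1 ?mulr1 // => j /andP[ji ji']; rewrite H1 // mean_const.
Qed.

Lemma mean_sqr_centered_sum (c k : R) (e : I -> T -> R) :
  (forall i, mean (e i) = 0) ->
  mean (fun d : {ffun I -> T} => (c + k * \sum_i e i (d i)) ^+ 2)
  = c ^+ 2 + k ^+ 2 * \sum_i mean (fun u => e i u ^+ 2).
Proof.
move=> e0.
have expand (d : {ffun I -> T}) : (c + k * \sum_i e i (d i)) ^+ 2 =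
    c ^+ 2 + (2 * c * k) * \sum_i e i (d i)
    + k ^+ 2 * \sum_i \sum_j e i (d i) * e j (d j).
  have -> : \sum_i \sum_j e i (d i) * e j (d j) = (\sum_i e i (d i)) ^+ 2.
    by rewrite expr2 mulr_suml; apply: eq_bigr => i _; rewrite mulr_sumr.
  ring.
have D_gt0 : (0 < #|{ffun I -> T}|)%N by rewrite card_ffun expn_gt0 T_gt0.
rewrite (funext expand) !meanD mean_const // !meanZ !mean_sum.
rewrite big1 ?mulr0 ?addr0 => [|i _]; last by rewrite mean_ffun_app1 e0.
congr (_ + _ * _); apply: eq_bigr => i _; rewrite mean_sum (bigD1 i) //=.
rewrite big1 ?addr0 => [|j ji]; last by rewrite mean_ffun_app2 1?eq_sym // e0 mul0r.
by rewrite (mean_ffun_app1 i (fun u => e i u * e i u)); under eq_fun do rewrite -expr2.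
Qed.
End MeanFfun.

Section SquaredNorm.
Variables (R : realType) (p : nat).
Implicit Types (a b c : 'rV[R]_p).

Lemma sqnorm_ge0 a : 0 <= sqnorm a.
Proof. by apply: sumr_ge0 => l _; rewrite sqr_ge0. Qed.

Lemma sqnormZ (k : R) a : sqnorm (k *: a) = k ^+ 2 * sqnorm a.
Proof. by rewrite /sqnorm mulr_sumr; apply: eq_bigr => l _; rewrite mxE exprMn. Qed.

Lemma sqnormBC a b : sqnorm (a - b) = sqnorm (b - a).
Proof. by apply: eq_bigr => l _; rewrite !mxE -sqrrN opprB. Qed.

Lemma sqnormB_le a b : sqnorm (a - b) <= 3/2 * sqnorm a + 3 * sqnorm b.
Proof.
rewrite /sqnorm !mulr_sumr -big_split /=; apply: ler_sum => l _.
by rewrite !mxE; have := sqr_ge0 (a 0 l + 2 * b 0 l); nra.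
Qed.

Lemma sqnormB_split a b c :
  sqnorm (a - c) <= 2 * sqnorm (a - b) + 2 * sqnorm (b - c).
Proof.
rewrite /sqnorm !mulr_sumr -big_split /=; apply: ler_sum => l _.
by rewrite !mxE; have := sqr_ge0 (a 0 l - 2 * b 0 l + c 0 l); nra.
Qed.

Lemma L_smooth_sqnorm (L : R) (g : 'rV[R]_p -> 'rV[R]_p) a b :
  0 <= L -> L_smooth L g -> sqnorm (g a - g b) <= L ^+ 2 * sqnorm (a - b).
Proof.
move=> L0 /(_ a b); rewrite /enorm => gL.
rewrite -(sqr_sqrtr (sqnorm_ge0 (g a - g b))) -(sqr_sqrtr (sqnorm_ge0 (a - b))).
by rewrite -exprMn lerXn2r ?nnegrE ?sqrtr_ge0 ?mulr_ge0 ?sqrtr_ge0.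
Qed.
End SquaredNorm.

Section VectorMean.
Variables (R : realType) (p : nat).

Definition vmean (T : finType) (F : T -> 'rV[R]_p) : 'rV[R]_p :=
  (#|T|%:R)^-1 *: \sum_u F u.

Variable T : finType.

Lemma vmean_coord (U : finType) (F : U -> 'rV[R]_p) l :
  vmean F 0 l = mean (fun u => F u 0 l).
Proof. by rewrite /vmean mxE summxE. Qed.

Lemma vmean_fst (T2 : finType) (F : T -> 'rV[R]_p) : (0 < #|T2|)%N ->
  vmean (fun u : T * T2 => F u.1) = vmean F.
Proof.
by move=> T2_gt0; apply/rowP => l; rewrite !vmean_coord; exact: (mean_fst (fun t => F t 0 l)).
Qed.

Lemma mean_sqnorm_sum (U : finType) (F : U -> 'rV[R]_p) :
  mean (fun u => sqnorm (F u)) = \sum_l mean (fun u => F u 0 l ^+ 2).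
Proof. exact: mean_sum. Qed.

Variable I : finType.
Hypothesis T_gt0 : (0 < #|T|)%N.

Lemma vmean_centered (F : T -> 'rV[R]_p) : vmean (fun u => F u - vmean F) = 0.
Proof.
rewrite {1}/vmean sumrB sumr_const -[vmean F *+ _]scaler_nat; change #|xpredT| with #|T|.
by rewrite scalerBr scalerA mulVf ?card_neq0 // scale1r subrr.
Qed.

Lemma mean_sqnormB_vmean_le (F : T -> 'rV[R]_p) :
  mean (fun u => sqnorm (F u - vmean F)) <= mean (fun u => sqnorm (F u)).
Proof.
rewrite !mean_sqnorm_sum; apply: ler_sum => l _.
have -> : (fun u => (F u - vmean F) 0 l ^+ 2)
    = fun u => (F u 0 l - mean (fun u => F u 0 l)) ^+ 2.
  by apply: funext => u; rewrite -vmean_coord; congr (_ ^+ 2); rewrite !mxE.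
exact: mean_sqrB_mean_le.
Qed.

Lemma mean_sqnorm_centered_sum (c : 'rV[R]_p) (k : R) (v : I -> T -> 'rV[R]_p) :
  (forall i, vmean (v i) = 0) ->
  mean (fun d : {ffun I -> T} => sqnorm (c + k *: \sum_i v i (d i)))
  = sqnorm c + k ^+ 2 * \sum_i mean (fun u => sqnorm (v i u)).
Proof.
move=> v0; rewrite mean_sqnorm_sum.
under eq_bigr => l _.
  under eq_fun do rewrite !mxE summxE.
  rewrite (@mean_sqr_centered_sum _ _ _ T_gt0 (c 0 l) k (fun i u => v i u 0 l)); last first.
    by move=> i; rewrite -vmean_coord v0 mxE.
  over.
rewrite big_split /= -mulr_sumr; congr (_ + _ * _).
by rewrite exchange_big; apply: eq_bigr => i _; rewrite mean_sqnorm_sum.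
Qed.
End VectorMean.

Section Ordinals.
Variables (R : realType) (p n : nat).

Lemma mean_ord (F : 'I_n -> R) : mean F = (n%:R)^-1 * \sum_i F i.
Proof. by rewrite /mean card_ord. Qed.

Lemma vmean_ord (F : 'I_n -> 'rV[R]_p) : vmean F = (n%:R)^-1 *: \sum_i F i.
Proof. by rewrite /vmean card_ord. Qed.
End Ordinals.

Section Averages.
Variables (R : realType) (n p : nat).
Implicit Types u v : 'I_n -> 'rV[R]_p.

Lemma avg_xD u v : avg_x (fun i => u i + v i) = avg_x u + avg_x v.
Proof. by rewrite /avg_x big_split scalerDr. Qed.

Lemma avg_xB u v : avg_x (fun i => u i - v i) = avg_x u - avg_x v.
Proof. by rewrite /avg_x sumrB scalerBr. Qed.

Lemma avg_xZ (c : R) v : avg_x (fun i => c *: v i) = c *: avg_x v.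
Proof. by rewrite /avg_x -scaler_sumr !scalerA mulrC. Qed.

Lemma avg_x_mix (W : 'M[R]_n) v : (forall r, \sum_i W i r = 1) ->
  avg_x (fun i => \sum_r W i r *: v r) = avg_x v.
Proof.
move=> Wcol; rewrite /avg_x exchange_big; congr (_ *: _).
by apply: eq_bigr => r _; rewrite -scaler_suml Wcol scale1r.
Qed.

Lemma consensus_errE v :
  (n%:R)^-1 * consensus_err v = mean (fun i => sqnorm (v i - avg_x v)).
Proof. by rewrite mean_ord. Qed.
End Averages.

Section Dynamics.
Variables (R : realType) (n m p : nat) (W : 'M[R]_n) (alpha : R).
Variable gf : 'I_n -> 'I_m -> 'rV[R]_p -> 'rV[R]_p.
Hypothesis Wcol : forall r, \sum_i W i r = 1.

Lemma gts_iter_past x0 (om om' : nat -> draws n m) k :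
  (forall t, (t < k)%N -> om t = om' t) ->
  gts_iter W alpha gf x0 om k = gts_iter W alpha gf x0 om' k.
Proof.
elim: k => [//|k IH] same /=.
by rewrite IH ?same // => t /ltnW; exact: same.
Qed.

Lemma cond_exp_Fk_iter x0 (X : gts_state R n m p -> R) om k :
  cond_exp_Fk (fun om' => X (gts_iter W alpha gf x0 om' k.+1)) k om
  = mean (fun d => X (gts_step W alpha gf (gts_iter W alpha gf x0 om k) d)).
Proof.
rewrite /cond_exp_Fk /mean; congr (_ * _); apply: eq_bigr => d _ /=.
rewrite /replace_draw eqxx (@gts_iter_past _ _ om) // => t tk.
by rewrite ltn_eqF.
Qed.

Lemma avg_y_tracks_avg_g x0 om k :
  avg_x (st_y (gts_iter W alpha gf x0 om k))
  = avg_x (st_gprev (gts_iter W alpha gf x0 om k)).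
Proof.
by elim: k => [//|k IH] /=; rewrite avg_x_mix // avg_xB avg_xD IH addrAC subrr add0r.
Qed.

Lemma avg_x_step (st : gts_state R n m p) d :
  avg_x (st_y st) = avg_x (st_gprev st) ->
  avg_x (st_x (gts_step W alpha gf st d))
  = avg_x (st_x st) - alpha *: avg_x (gts_g gf st d).
Proof.
move=> track /=.
by rewrite avg_x_mix // avg_xB avg_xZ avg_x_mix // avg_xB avg_xD track addrAC subrr add0r.
Qed.
Lemma t_quantE (s : gts_state R n m p) :
  t_quant s = mean (fun i => mean (fun j => sqnorm (avg_x (st_x s) - st_z s i j))).
Proof. by rewrite mean_ord; under eq_fun do rewrite mean_ord. Qed.
End Dynamics.

Lemma one_step_arith (R : realFieldType) (t c G S D a2 l2 mu nu : R) :
  0 <= t -> 0 <= c -> 0 <= a2 -> 0 <= l2 -> 0 <= mu -> 0 <= nu ->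
  a2 * l2 * nu <= mu / 8 -> D <= 2 * c + 2 * t -> S <= G + nu * (l2 * D) ->
  3/2 * (mu * c + (1 - mu) * t) + 3 * (a2 * S)
  <= 2 * t + 3 * a2 * G + 9/4 * mu * c.
Proof.
move=> t0 c0 a0 l0 mu0 nu0 gain hD hS.
have := ler_wpM2l a0 hS.
have := ler_wpM2l (mulr_ge0 (mulr_ge0 a0 l0) nu0) hD.
have := ler_wpM2r (addr_ge0 (mulr_ge0 (ler0n _ 2) c0) (mulr_ge0 (ler0n _ 2) t0)) gain.
have := mulr_ge0 mu0 t0.
lra.
Qed.

Lemma step_size_sqr (R : rcfType) (a b L alpha : R) :
  0 <= a -> 0 < b -> 0 < L -> 0 < alpha ->
  alpha <= Num.sqrt a / (Num.sqrt b * L) -> b * (alpha * L) ^+ 2 <= a.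
Proof.
move=> a0 b0 L0 alpha0; rewrite ler_pdivlMr ?mulr_gt0 ?sqrtr_gt0 // => le_a.
rewrite -(sqr_sqrtr a0) (_ : b * _ = (alpha * (Num.sqrt b * L)) ^+ 2).
  by rewrite ler_sqr // nnegrE ?sqrtr_ge0 // !mulr_ge0 ?sqrtr_ge0 // ltW.
by rewrite !exprMn sqr_sqrtr ?ltW //; ring.
Qed.

Section OneStep.
Variables (R : realType) (n m p : nat) (W : 'M[R]_n) (alpha L : R).
Variable gf : 'I_n -> 'I_m -> 'rV[R]_p -> 'rV[R]_p.
Hypotheses (n_gt0 : (0 < n)%N) (m_gt0 : (0 < m)%N) (L_ge0 : 0 <= L).
Hypothesis Wcol : forall r, \sum_i W i r = 1.
Hypothesis smooth : forall i j, L_smooth L (gf i j).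
Variable st : gts_state R n m p.
Hypothesis track : avg_x (st_y st) = avg_x (st_gprev st).

Let X := st_x st.
Let Z := st_z st.
Let xb := avg_x X.
Let delta i (t : 'I_m) := gf i t (X i) - gf i t (Z i t).

Let agents_gt0 : (0 < #|'I_n|)%N. Proof. by rewrite card_ord. Qed.
Let draw_gt0 : (0 < #|'I_m|)%N. Proof. by rewrite card_ord. Qed.
Let pairs_gt0 : (0 < #|{: 'I_m * 'I_m}|)%N.
Proof. by rewrite card_prod muln_gt0 draw_gt0. Qed.

Lemma avg_x_gts_g d : avg_x (gts_g gf st d)
  = avg_grad gf X + avg_x (fun i => delta i (d i).1 - vmean (delta i)).
Proof.
have per_agent i : gts_g gf st d i
    = delta i (d i).1 - vmean (delta i) + (m%:R)^-1 *: \sum_j gf i j (X i).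
  by rewrite /gts_g vmean_ord sumrB scalerBr opprB addrA subrK.
by rewrite (funext per_agent) avg_xD addrC.
Qed.

Lemma mean_sqnorm_avg_g_le :
  mean (fun d : draws n m => sqnorm (avg_x (gts_g gf st d)))
  <= sqnorm (avg_grad gf X)
     + (n%:R)^-1 * (L ^+ 2 * mean (fun i => mean (fun j => sqnorm (X i - Z i j)))).
Proof.
have centered i : vmean (fun u : 'I_m * 'I_m => delta i u.1 - vmean (delta i)) = 0.
  by rewrite -(@vmean_fst _ _ _ 'I_m (delta i)) // (vmean_centered pairs_gt0).
under eq_fun do rewrite avg_x_gts_g.
have := mean_sqnorm_centered_sum pairs_gt0 (avg_grad gf X) (n%:R)^-1 centered.
rewrite /avg_x /= => ->; apply: lerD => //; rewrite mean_ord.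
set S := \sum_i mean (fun j => sqnorm (X i - Z i j)).
rewrite (_ : _ * (_ * (_ * S)) = (n%:R)^-1 ^+ 2 * (L ^+ 2 * S)); last by ring.
rewrite ler_wpM2l ?sqr_ge0 // mulr_sumr ler_sum // => i _.
rewrite (mean_fst (fun t => sqnorm (delta i t - vmean (delta i)))) //.
apply: le_trans (mean_sqnormB_vmean_le draw_gt0 _) _; rewrite -meanZ; apply: ler_mean => t.
exact: L_smooth_sqnorm.
Qed.

Lemma t_quant_step_le d :
  t_quant (gts_step W alpha gf st d)
  <= 3/2 * mean (fun i => mean (fun j =>
                 sqnorm (xb - st_z (gts_step W alpha gf st d) i j)))
     + 3 * (alpha ^+ 2 * sqnorm (avg_x (gts_g gf st d))).
Proof.
set g := avg_x (gts_g gf st d); set z' := st_z _.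
have pointwise i j : sqnorm (xb - alpha *: g - z' i j)
    <= 3/2 * sqnorm (xb - z' i j) + 3 * (alpha ^+ 2 * sqnorm g).
  by rewrite -sqnormZ addrAC; exact: sqnormB_le.
rewrite t_quantE (avg_x_step _ _ Wcol _ track).
apply: le_trans (ler_mean (fun i => ler_mean (pointwise i))) _.
under eq_fun do rewrite meanD meanZ (mean_const draw_gt0).
by rewrite meanD meanZ (mean_const agents_gt0).
Qed.

Lemma mean_refresh_dist :
  mean (fun d : draws n m => mean (fun i => mean (fun j =>
          sqnorm (xb - st_z (gts_step W alpha gf st d) i j))))
  = (m%:R)^-1 * ((n%:R)^-1 * consensus_err X) + (1 - (m%:R)^-1) * t_quant st.
Proof.
rewrite mean_comm; under eq_fun do rewrite mean_comm.
(* Entry z_{ij} is overwritten by x_i exactly when agent i samples j. *)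
have refresh i j : mean (fun d : draws n m =>
      sqnorm (xb - st_z (gts_step W alpha gf st d) i j))
    = (m%:R)^-1 * sqnorm (X i - xb) + (1 - (m%:R)^-1) * sqnorm (xb - Z i j).
  rewrite /= (mean_ffun_app1 pairs_gt0 i
                (fun u => sqnorm (xb - if j == u.2 then X i else Z i j))).
  rewrite (mean_snd (fun s => sqnorm (xb - if j == s then X i else Z i j))) //.
  under eq_fun do rewrite (fun_if (fun z => sqnorm (xb - z))).
  by rewrite mean_if_eq // card_ord sqnormBC.
under eq_fun do under eq_fun do rewrite refresh.
under eq_fun do rewrite meanD meanZ meanZ (mean_const draw_gt0).
by rewrite meanD meanZ meanZ consensus_errE t_quantE.
Qed.

Lemma mean_dist_table_le :
  mean (fun i => mean (fun j => sqnorm (X i - Z i j)))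
  <= 2 * ((n%:R)^-1 * consensus_err X) + 2 * t_quant st.
Proof.
apply: le_trans (ler_mean (fun i => ler_mean (fun j => sqnormB_split (X i) xb (Z i j)))) _.
under eq_fun do rewrite meanD meanZ meanZ (mean_const draw_gt0).
by rewrite meanD meanZ meanZ consensus_errE t_quantE.
Qed.

Lemma mean_t_quant_step_le : 8 * m%:R * (alpha * L) ^+ 2 <= n%:R ->
  mean (fun d => t_quant (gts_step W alpha gf st d))
  <= 2 * t_quant st + 3 * alpha ^+ 2 * sqnorm (avg_grad gf X)
     + 9 / (4 * m%:R * n%:R) * consensus_err X.
Proof.
move=> step_size.
have n_neq0 : (n%:R : R) != 0 by rewrite pnatr_eq0 -lt0n.
have m_neq0 : (m%:R : R) != 0 by rewrite pnatr_eq0 -lt0n.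
have gain : alpha ^+ 2 * L ^+ 2 * (n%:R)^-1 <= (m%:R)^-1 / 8.
  have -> : alpha ^+ 2 * L ^+ 2 * (n%:R)^-1
      = 8 * m%:R * (alpha * L) ^+ 2 / (8 * m%:R * n%:R).
    by field; rewrite m_neq0 n_neq0.
  have -> : (m%:R)^-1 / 8 = n%:R / (8 * m%:R * n%:R) :> R.
    by field; rewrite m_neq0 n_neq0.
  by rewrite ler_pM2r // invr_gt0 !mulr_gt0 ?ltr0n.
apply: le_trans (ler_mean t_quant_step_le) _.
rewrite meanD (meanZ (3/2)) (meanZ 3) (meanZ (alpha ^+ 2)) mean_refresh_dist.
rewrite (_ : 9 / _ * _ = 9/4 * (m%:R)^-1 * ((n%:R)^-1 * consensus_err X)); last first.
  by field; rewrite m_neq0 n_neq0.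
apply: one_step_arith mean_dist_table_le mean_sqnorm_avg_g_le;
  rewrite ?sqr_ge0 ?invr_ge0 ?ler0n //.
- by rewrite t_quantE mean_ge0 // => i; rewrite mean_ge0 // => j; exact: sqnorm_ge0.
- by rewrite consensus_errE mean_ge0 // => i; exact: sqnorm_ge0.
Qed.

End OneStep.

Theorem corollary2 (R : realType) (n m p : nat)
  (f : 'I_n -> 'I_m -> 'rV[R]_p -> R)
  (gf : 'I_n -> 'I_m -> 'rV[R]_p -> 'rV[R]_p)
  (L : R) (W : 'M[R]_n) (alpha : R) (x0 : 'rV[R]_p) :
  (0 < n)%N -> (0 < m)%N -> (0 < p)%N ->
  0 < L ->
  (forall i j, is_gradient (f i j) (gf i j)) ->
  (forall i j, L_smooth L (gf i j)) ->
  (exists c : R, forall x : 'rV[R]_p,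
      c <= (n%:R)^-1 * \sum_(i < n) ((m%:R)^-1 * \sum_(j < m) f i j x)) ->
  doubly_stochastic W -> primitive_mx W ->
  0 < alpha -> alpha <= Num.sqrt (n%:R) / (Num.sqrt (8 * m%:R) * L) ->
  forall (k : nat) (omega : nat -> draws n m),
    cond_exp_Fk (fun om => t_quant (gts_iter W alpha gf x0 om k.+1)) k omega
    <= 2 * t_quant (gts_iter W alpha gf x0 omega k)
       + 3 * alpha ^+ 2 * sqnorm (avg_grad gf (st_x (gts_iter W alpha gf x0 omega k)))
       + 9 / (4 * m%:R * n%:R) * consensus_err (st_x (gts_iter W alpha gf x0 omega k)).
Proof.
(* Only smoothness and column stochasticity of W enter the one-step bound. *)
move=> n_gt0 m_gt0 _ L_gt0 _ smooth _ [_ [_ Wcol]] _ alpha_gt0 alpha_le k omega.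
have step_size : 8 * m%:R * (alpha * L) ^+ 2 <= n%:R.
  by apply: step_size_sqr alpha_le; rewrite ?ler0n ?mulr_gt0 ?ltr0n.
rewrite cond_exp_Fk_iter.
apply: (mean_t_quant_step_le (L := L)) => //; first exact: ltW.
exact: avg_y_tracks_avg_g.
Qed.
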